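(* Let $c\ge1$ be an odd integer. Every $c$-indistinguishable finite bias distribution is also $(c+1)$-indistinguishable.
   Context: A finite bias distribution is a probability distribution $\mathcal{P}$ supported on a finite subset of $(0,1)$ that is symmetric: it outputs $a$ and $1-a$ with the same probability. $E_p$ is expectation over $p\sim\mathcal{P}$. $\sigma(p)=\sqrt{(1-p)/p}$; for integers $\ell\ge1$, $0\le x\le\ell$, $f_{\ell,x}(p)=p^x(1-p)^{\ell-x}(x\sigma(p)-(\ell-x)\sigma(1-p))$ and $R_{\ell,x}=\max\{0,E_p[f_{\ell,x}(p)]\}$. For a positive integer $c$, $\mathcal{P}$ is $c$-indistinguishable if $\sum_{x=1}^{\ell-1}\binom{\ell}{x}R_{\ell,x}=0$ for all $2\le\ell\le c$ (so every such distribution is $1$-indistinguishable). *)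

From HB Require Import structures.
From mathcomp Require Import all_boot all_order all_algebra.
From mathcomp Require Import reals.
Set Implicit Arguments. Unset Strict Implicit. Unset Printing Implicit Defensive.
Import Order.TTheory GRing.Theory Num.Theory.
Local Open Scope ring_scope.

(* A finite bias distribution is given by a finite support S (a duplicate-free
   list of points) and a weight function w; P(p) = w p for p in S, 0 elsewhere. *)
Definition is_bias_dist (R : realType) (S : seq R) (w : R -> R) : Prop :=
  [/\ uniq S,
      (forall p, p \in S -> 0 < p < 1),
      (forall p, p \in S -> 0 <= w p),
      \sum_(p <- S) w p = 1
    & (forall p, p \in S -> (1 - p) \in S /\ w (1 - p) = w p)].

Definition Ep (R : realType) (S : seq R) (w : R -> R) (g : R -> R) : R :=
  \sum_(p <- S) w p * g p.

Definition sigma (R : realType) (p : R) : R := Num.sqrt ((1 - p) / p).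

Definition f_lx (R : realType) (l x : nat) (p : R) : R :=
  p ^+ x * (1 - p) ^+ (l - x)
    * (x%:R * sigma p - (l - x)%:R * sigma (1 - p)).

Definition R_lx (R : realType) (S : seq R) (w : R -> R) (l x : nat) : R :=
  Num.max 0 (Ep S w (@f_lx R l x)).

Definition indistinguishable (R : realType) (c : nat) (S : seq R) (w : R -> R)
  : Prop :=
  forall l : nat, (2 <= l <= c)%N ->
    \sum_(1 <= x < l) 'C(l, x)%:R * R_lx S w l x = 0.

From HB Require Import structures.
From mathcomp Require Import all_boot all_order all_algebra.
From mathcomp Require Import reals.
From mathcomp Require Import zify ring lra.
Import Order.TTheory GRing.Theory Num.Theory.
Local Open Scope ring_scope.

(* Write E(l, x) for E_p[f_{l,x}(p)].  Since p sigma(p) = (1 - p) sigma(1 - p),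
   the f_{l,x} satisfy Pascal's rule E(l, x) = E(l+1, x) + E(l+1, x+1), and the
   symmetry of the distribution gives E(l, l - x) = - E(l, x).  Indistinguishability
   up to c says E(l, x) <= 0 for 2 <= l <= c and 0 < x < l; with the symmetry this
   forces E(c, x) = 0 for 0 < x < c.  Pascal's rule then makes E(c+1, 1), ...,
   E(c+1, c) alternate: E(c+1, x) = (-1)^(x-1) E(c+1, 1).  For odd c the row
   c + 1 = 2m has the self-symmetric middle entry E(2m, m) = - E(2m, m) = 0, so
   E(c+1, 1) = 0 and the whole row vanishes. *)

Lemma mul_sigma_sym (R : realType) (p : R) : 0 < p < 1 ->
  p * sigma p = (1 - p) * sigma (1 - p).
Proof.
move=> /andP[p_gt0 p_lt1]; rewrite /sigma.
have q_gt0 : 0 < 1 - p by rewrite subr_gt0.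
have -> : 1 - (1 - p) = p by ring.
rewrite -{1}(@ger0_norm _ p) ?ltW // -sqrtr_sqr -sqrtrM ?sqr_ge0 //.
rewrite -{2}(@ger0_norm _ (1 - p)) ?ltW // -sqrtr_sqr -sqrtrM ?sqr_ge0 //.
by congr Num.sqrt; field; rewrite ?gt_eqF.
Qed.

Lemma f_lx_pascal (R : realType) (l x : nat) (p : R) : (x <= l)%N -> 0 < p < 1 ->
  f_lx l x p = f_lx l.+1 x p + f_lx l.+1 x.+1 p.
Proof.
move=> le_xl p01; rewrite /f_lx subSn // subSS.
apply/eqP; rewrite -subr_eq0; apply/eqP.
transitivity (p ^+ x * (1 - p) ^+ (l - x)
                * ((1 - p) * sigma (1 - p) - p * sigma p)).
  by rewrite !exprS; ring.
by rewrite mul_sigma_sym // subrr mulr0.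
Qed.

Lemma f_lx_sym (R : realType) (l x : nat) (p : R) : (x <= l)%N ->
  f_lx l (l - x) (1 - p) = - f_lx l x p.
Proof.
move=> le_xl; rewrite /f_lx subKn //.
have -> : 1 - (1 - p) = p by ring.
ring.
Qed.

Lemma R_lx_eq0 (R : realType) (S : seq R) (w : R -> R) (l x : nat) :
  (R_lx S w l x == 0) = (Ep S w (f_lx l x) <= 0).
Proof. exact/eqP/max_idPl. Qed.

Lemma indistinguishableP (R : realType) (c : nat) (S : seq R) (w : R -> R) :
  indistinguishable c S w <->
  (forall l x, (2 <= l <= c)%N -> (0 < x < l)%N -> Ep S w (f_lx l x) <= 0).
Proof.
have R_lx_ge0 l x : 0 <= R_lx S w l x by rewrite /R_lx le_max lexx.
split=> [indist l x l2c /andP[x_gt0 x_lt_l] | E_le0 l l2c].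
  have /eqP := indist l l2c.
  rewrite psumr_eq0 => [/allP/(_ x)|y _]; last by rewrite mulr_ge0.
  rewrite mem_index_iota x_gt0 x_lt_l mulf_eq0 pnatr_eq0 -R_lx_eq0 => /(_ isT).
  by rewrite eqn0Ngt bin_gt0 ltnW.
rewrite big_nat big1 // => x x1l.
by apply/eqP; rewrite mulf_eq0 R_lx_eq0 E_le0 ?orbT.
Qed.

Section BiasDistribution.

Context {R : realType} {S : seq R} {w : R -> R}.
Hypothesis bias : is_bias_dist S w.

Local Notation E l x := (Ep S w (f_lx l x)).

Lemma Ep_reflect (g : R -> R) : Ep S w g = Ep S w (fun p => g (1 - p)).
Proof.
case: bias => uniqS _ _ _ symS.
have reflect_inj : injective (fun p : R => 1 - p).
  by apply: (can_inj (g := fun p : R => 1 - p)) => p /=; ring.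
have reflect_perm : perm_eq S (map (fun p => 1 - p) S).
  apply: uniq_perm => //; first by rewrite map_inj_uniq.
  move=> y; apply/idP/mapP => [yS | [z zS ->]]; last by case: (symS z zS).
  by exists (1 - y); [case: (symS y yS) | ring].
rewrite /Ep (perm_big _ reflect_perm) big_map.
by apply: eq_big_seq => p pS; case: (symS p pS) => _ ->.
Qed.

Lemma Ep_f_pascal {l x} : (x <= l)%N -> E l x = E l.+1 x + E l.+1 x.+1.
Proof.
case: bias => _ S01 _ _ _ le_xl; rewrite /Ep -big_split.
by apply: eq_big_seq => p pS /=; rewrite -mulrDr -f_lx_pascal ?S01.
Qed.

Lemma Ep_f_sym {l x} : (x <= l)%N -> E l (l - x) = - E l x.
Proof.
move=> le_xl; rewrite Ep_reflect /Ep -sumrN.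
by apply: eq_bigr => p _; rewrite f_lx_sym // mulrN.
Qed.

Lemma Ep_f_middle m : E m.*2 m = 0.
Proof.
have := @Ep_f_sym m.*2 m; rewrite -addnn addnK leq_addl => /(_ isT) E_opp.
lra.
Qed.

Lemma Ep_f_eq0_of_indistinguishable c x :
  indistinguishable c S w -> (0 < x < c)%N -> E c x = 0.
Proof.
move=> /indistinguishableP E_le0 x0c; apply/le_anti.
rewrite E_le0 /=; [|lia|lia].
by rewrite -oppr_le0 -Ep_f_sym ?E_le0; lia.
Qed.

Lemma Ep_f_alternate {l} : (forall x, (0 < x < l)%N -> E l x = 0) ->
  forall x, (x < l)%N -> E l.+1 x.+1 = (-1) ^+ x * E l.+1 1.
Proof.
move=> E_row0; elim=> [|x IHx] lt_xl; first by rewrite mul1r.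
have /eqP := E_row0 x.+1 lt_xl.
rewrite (Ep_f_pascal (ltnW lt_xl)) addr_eq0 -eqr_oppLR eq_sym => /eqP ->.
by rewrite IHx 1?ltnW // exprS mulN1r mulNr.
Qed.

Lemma Ep_f_succ_eq0 {l} : odd l -> (forall x, (0 < x < l)%N -> E l x = 0) ->
  forall x, (0 < x < l.+1)%N -> E l.+1 x = 0.
Proof.
move=> odd_l E_row0 [//|x] /andP[_ lt_xl].
rewrite (Ep_f_alternate E_row0 _ lt_xl).
suff -> : E l.+1 1 = 0 by rewrite mulr0.
set m := uphalf l.
have m2 : (m + m = l.+1)%N by rewrite addnn odd_uphalfK.
have m_gt0 : (0 < m)%N by lia.
have /eqP := Ep_f_middle m; rewrite -addnn m2 -(prednK m_gt0).
rewrite (Ep_f_alternate E_row0); last by lia.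
by rewrite mulf_eq0 signr_eq0 => /eqP.
Qed.

End BiasDistribution.

Theorem proposition4 (R : realType) (c : nat) (S : seq R) (w : R -> R) :
  (1 <= c)%N -> odd c ->
  is_bias_dist S w ->
  indistinguishable c S w ->
  indistinguishable c.+1 S w.
Proof.
move=> _ odd_c bias indist.
have /indistinguishableP E_le0 := indist.
apply/indistinguishableP => l x /andP[l2 l_le_c1] x0l.
have [l_le_c | l_gt_c] := leqP l c; first by rewrite E_le0 ?l2.
have l_eq : l = c.+1 by lia.
subst l; rewrite (Ep_f_succ_eq0 bias odd_c) // => y y0c.
exact: Ep_f_eq0_of_indistinguishable.
Qed.
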